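(* Let $\mathbb{F}$ be a field, let $U$ and $U'$ be finite-dimensional $\mathbb{F}$-vector spaces with $\dim U>1$, and let $b$ be a symplectic form on $U'$. Let $\mathcal{V}\subseteq \operatorname{Hom}_{\mathbb{F}}(U,U')$ be a linear subspace such that the range of every element of $\mathcal{V}$ is totally $b$-singular. Then $$\dim\mathcal{V}\le \frac{(\dim U)(\dim U')}{2}.$$ Moreover, if $\dim U>2$ and $\dim\mathcal{V}=\frac{(\dim U)(\dim U')}{2}$, then $\mathcal{V}=\operatorname{Hom}_{\mathbb{F}}(U,\mathcal{L})$ for some Lagrangian $\mathcal{L}$ of $(U',b)$.
   Context: A symplectic form is a non-degenerate alternating bilinear form ($b(x,x)=0$ for all $x$). A subspace $W$ is totally $b$-singular if $b(x,y)=0$ for all $x,y\in W$. A Lagrangian of $(U',b)$ is a totally $b$-singular subspace of $U'$ of dimension $\frac{\dim U'}{2}$. *)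

From HB Require Import structures.
From mathcomp Require Import all_boot all_order all_algebra.
Set Implicit Arguments. Unset Strict Implicit. Unset Printing Implicit Defensive.
Import GRing.Theory.
Local Open Scope ring_scope.

(* Coordinatisation: U = 'rV[F]_n, U' = 'rV[F]_m; a linear map U -> U' is a
   matrix A : 'M[F]_(n, m) acting by u |-> u *m A, whose range is the row space
   of A. *)

Definition bform (F : fieldType) (m : nat) (B : 'M[F]_m) (x y : 'rV[F]_m) : F :=
  (x *m B *m y^T) 0 0.

Definition alternating (F : fieldType) (m : nat) (B : 'M[F]_m) : Prop :=
  forall x, bform B x x = 0.

Definition nondegenerate (F : fieldType) (m : nat) (B : 'M[F]_m) : Prop :=
  forall x, (forall y, bform B x y = 0) -> x = 0.

Definition symplectic (F : fieldType) (m : nat) (B : 'M[F]_m) : Prop :=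
  alternating B /\ nondegenerate B.

Definition totally_singular (F : fieldType) (m k : nat) (B : 'M[F]_m)
  (W : 'M[F]_(k, m)) : Prop :=
  forall x y : 'rV[F]_m, (x <= W)%MS -> (y <= W)%MS -> bform B x y = 0.

Definition lagrangian (F : fieldType) (m : nat) (B : 'M[F]_m) (L : 'M[F]_m) : Prop :=
  totally_singular B L /\ (\rank L * 2 = m)%N.

From Pilot Require Import Defs.
From HB Require Import structures.
From mathcomp Require Import all_boot all_order all_algebra.
From mathcomp Require Import zify.
Set Implicit Arguments. Unset Strict Implicit. Unset Printing Implicit Defensive.
Import GRing.Theory.
Local Open Scope ring_scope.

(* Let K_i be the space of vectors x such that the matrix whose only nonzero
   row is x, in position i, lies in V. Polarizing the singularity of the rows
   of A + C shows that row i of any A in V is orthogonal to K_j for j <> i;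
   in particular dim K_i + dim K_j <= m. Zeroing row i maps V, with kernel
   K_i, onto a space with one nonzero row less, so removing a row with
   2 dim K_i <= m gives 2 dim V <= n m by induction on the number of rows;
   for two rows i, j the rows i of V are orthogonal to K_j, so dim V <= m.
   In the equality case with n > 2 the same count gives 2 dim K_i >= m for
   every i. As K_j + K_k is orthogonal to K_i for a third index i, all the
   K_j coincide with one Lagrangian L, and every row of every A in V is
   orthogonal to L, hence lies in L. *)

Section BilinearForm.
Variables (F : fieldType) (m : nat) (B : 'M[F]_m).

Lemma bformDl x y z : bform B (x + y) z = bform B x z + bform B y z.
Proof. by rewrite /bform !mulmxDl mxE. Qed.

Lemma bformDr x y z : bform B x (y + z) = bform B x y + bform B x z.
Proof. by rewrite /bform linearD /= mulmxDr mxE. Qed.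

Lemma bformZl a x z : bform B (a *: x) z = a * bform B x z.
Proof. by rewrite /bform -!scalemxAl mxE. Qed.

Lemma bform0l z : bform B 0 z = 0.
Proof. by rewrite /bform !mul0mx mxE. Qed.

Lemma bform0r z : bform B z 0 = 0.
Proof. by rewrite /bform trmx0 mulmx0 mxE. Qed.

Definition vbasismx (W : {vspace 'rV[F]_m}) : 'M[F]_(\dim W, m) :=
  \matrix_(l < \dim W) (vbasis W)`_l.

Lemma vbasismx_subE (W : {vspace 'rV[F]_m}) x :
  (x <= vbasismx W)%MS = (x \in W).
Proof.
apply/idP/idP => [/submxP [D ->] | /coord_vbasis ->].
  rewrite mulmx_sum_row; apply: memv_suml => l _; rewrite rowK.
  by apply/memvZ/vbasis_mem/mem_nth; rewrite size_tuple.
apply: summx_sub => l _; apply: scalemx_sub.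
by rewrite -(rowK (fun l => (vbasis W)`_l) l); apply: row_sub.
Qed.

Lemma rank_vbasismx (W : {vspace 'rV[F]_m}) : \rank (vbasismx W) = \dim W.
Proof.
apply/eqP/inj_row_free => v; rewrite mulmx_sum_row => v0.
apply/rowP => l; rewrite mxE.
move/freeP: (basis_free (vbasisP W)) => /(_ (fun i => v 0 i)); apply.
by rewrite -{}[RHS]v0; apply: eq_bigr => i _; rewrite rowK.
Qed.

Definition bform_orthogonal (W Z : {vspace 'rV[F]_m}) :=
  forall x y, x \in W -> y \in Z -> bform B x y = 0.

Hypothesis ndB : Defs.nondegenerate B.

Lemma orthogonal_dimv_le W Z : bform_orthogonal W Z -> (\dim W + \dim Z <= m)%N.
Proof.
move=> oWZ; set MW := vbasismx W; set MZ := vbasismx Z.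
have freeB : row_free B.
  by apply/inj_row_free => v vB; apply: ndB => y; rewrite /bform vB mul0mx mxE.
have MWBZ : MW *m B *m MZ^T = 0.
  apply/matrixP => q p; rewrite [RHS]mxE -(oWZ (row q MW) (row p MZ)).
  - by rewrite /bform -!row_mul !mxE; apply: eq_bigr => j _; rewrite !mxE.
  - by rewrite -vbasismx_subE row_sub.
  - by rewrite -vbasismx_subE row_sub.
have /mxrankS : (MZ <= kermx (MW *m B)^T)%MS.
  by apply/sub_kermxP; rewrite -[MZ]trmxK -trmx_mul MWBZ trmx0.
rewrite mxrank_ker mxrank_tr mxrankMfree // !rank_vbasismx.
by have := rank_leq_col MW; rewrite rank_vbasismx; lia.
Qed.

Lemma orthogonal_half_dimv_mem W x :
  (\dim W * 2 = m)%N -> bform_orthogonal W W ->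
  (forall y, y \in W -> bform B x y = 0) -> x \in W.
Proof.
move=> dimW oWW oxW.
have oWxW : bform_orthogonal (W + <[x]>) W.
  move=> _ y /memv_addP [w wW [_ /vlineP [c ->] ->]] yW.
  by rewrite bformDl bformZl oWW // oxW // mulr0 addr0.
have /eqP -> : (W == W + <[x]>)%VS.
  by rewrite eqEdim addvSl /=; have := orthogonal_dimv_le oWxW; lia.
by rewrite memvE addvSr.
Qed.

End BilinearForm.

Lemma dimv_limg_le (F : fieldType) (aT rT : vectType F) (f : 'Hom(aT, rT)) U :
  (\dim (f @: U) <= \dim U)%N.
Proof. by rewrite -(limg_ker_dim f U) leq_addl. Qed.

Lemma exists_ord_neq2 n (j k : 'I_n) :
  (2 < n)%N -> exists i : 'I_n, (i != j) && (i != k).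
Proof.
move=> n_gt2; have /card_gt0P [i] : (0 < #|~: [set j; k]|)%N.
  have := cardsC [set j; k]; rewrite cards2 card_ord.
  by case: (j != k) => /=; lia.
by rewrite !inE negb_or => ?; exists i.
Qed.

Section RowSlices.
Variables (F : fieldType) (n m : nat) (B : 'M[F]_m).
Implicit Types (V : {vspace 'M[F]_(n, m)}) (A : 'M[F]_(n, m)) (x y : 'rV[F]_m).

Definition single_row (i : 'I_n) x : 'M[F]_(n, m) :=
  (delta_mx i 0 : 'M[F]_(n, 1)) *m x.

Definition single_rowL (i : 'I_n) : 'Hom('rV[F]_m, 'M[F]_(n, m)) :=
  linfun (mulmx (delta_mx i 0 : 'M[F]_(n, 1))).

Definition zero_rowL (i : 'I_n) : 'Hom('M[F]_(n, m), 'M[F]_(n, m)) :=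
  linfun (mulmx (1%:M - delta_mx i i : 'M[F]_n)).

Definition row_projL (i : 'I_n) : 'Hom('M[F]_(n, m), 'rV[F]_m) :=
  linfun (mulmx (delta_mx 0 i : 'M[F]_(1, n))).

Lemma single_rowLE i x : single_rowL i x = single_row i x.
Proof. by rewrite lfunE. Qed.

Lemma row_projLE i A : row_projL i A = row i A.
Proof. by rewrite lfunE /= rowE. Qed.

Lemma zero_rowLE i A : zero_rowL i A = A - single_row i (row i A).
Proof.
by rewrite lfunE /= mulmxBl mul1mx /single_row rowE mulmxA mul_delta_mx.
Qed.

Lemma row_single_row k i x : row k (single_row i x) = if k == i then x else 0.
Proof.
apply/rowP => j; rewrite !mxE big_ord1 !mxE.
by case: (k == i); rewrite ?mul1r ?mul0r ?mxE.
Qed.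

Lemma row_zero_row k i A : row k (zero_rowL i A) = if k == i then 0 else row k A.
Proof.
rewrite zero_rowLE linearB /= row_single_row.
by case: eqP => [->|]; rewrite ?subrr ?subr0.
Qed.

Lemma single_row_rowE i A : (forall k, k != i -> row k A = 0) ->
  A = single_row i (row i A).
Proof.
move=> A0; apply/row_matrixP => k; rewrite row_single_row.
by case: eqP => [->|/eqP /A0].
Qed.

Lemma sum_single_row A : A = \sum_i single_row i (row i A).
Proof.
apply/row_matrixP => k; rewrite linear_sum (bigD1 k) //= row_single_row eqxx.
by rewrite big1 ?addr0 // => i /negbTE; rewrite row_single_row eq_sym => ->.
Qed.

Definition slice V i := (single_rowL i @^-1: V)%VS.

Lemma mem_slice V i x : (x \in slice V i) = (single_row i x \in V).
Proof. by rewrite -memv_preim single_rowLE. Qed.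

Lemma dimv_le_slice_zero_row V i :
  (\dim V <= \dim (slice V i) + \dim (zero_rowL i @: V))%N.
Proof.
rewrite -(limg_ker_dim (zero_rowL i) V) leq_add2r.
apply: leq_trans (dimv_limg_le (single_rowL i) _); apply/dimvS/subvP => A.
rewrite memv_cap memv_ker zero_rowLE subr_eq0 => /andP [AV /eqP defA].
by rewrite defA -single_rowLE memv_img // mem_slice -defA.
Qed.

Definition rows_singular V :=
  forall A, A \in V -> forall p q, bform B (row p A) (row q A) = 0.

Definition rows_supported (S : {set 'I_n}) V :=
  forall A, A \in V -> forall k, k \notin S -> row k A = 0.

Lemma rows_singular_zero_row V i :
  rows_singular V -> rows_singular (zero_rowL i @: V).
Proof.
move=> sV _ /memv_imgP [A AV ->] p q; rewrite !row_zero_row.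
by case: (p == i); case: (q == i); rewrite ?bform0l ?bform0r ?sV.
Qed.

Lemma rows_supported_zero_row S V i :
  rows_supported S V -> rows_supported (S :\ i) (zero_rowL i @: V).
Proof.
move=> suppV _ /memv_imgP [A AV ->] k; rewrite in_setD1 negb_and negbK.
by rewrite row_zero_row; case: (k == i) => //= /suppV ->.
Qed.

Lemma bform_rows_polar V A C p q : rows_singular V -> A \in V -> C \in V ->
  bform B (row p A) (row q C) + bform B (row p C) (row q A) = 0.
Proof.
move=> sV AV CV; have := sV _ (memvD AV CV) p q.
rewrite !linearD /= !bformDl !bformDr (sV _ AV) (sV _ CV) add0r addr0.
by rewrite addrC.
Qed.

Lemma row_proj_orthogonal_slice V i j : rows_singular V -> i != j ->
  bform_orthogonal B (row_projL i @: V) (slice V j).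
Proof.
move=> sV ij _ y /memv_imgP [A AV ->]; rewrite mem_slice row_projLE => yV.
have := bform_rows_polar i j sV AV yV.
by rewrite !row_single_row eqxx (negbTE ij) bform0l addr0.
Qed.

Lemma slices_orthogonal V i j : rows_singular V -> i != j ->
  bform_orthogonal B (slice V i) (slice V j).
Proof.
move=> sV ij x y xK; apply: (row_proj_orthogonal_slice sV ij).
have -> : x = row_projL i (single_row i x).
  by rewrite row_projLE row_single_row eqxx.
by rewrite memv_img // -mem_slice.
Qed.

Hypothesis ndB : Defs.nondegenerate B.

Lemma dimv_two_rows_le V i j : i != j -> rows_singular V ->
  rows_supported [set i; j] V -> (\dim V <= m)%N.
Proof.
move=> ij sV suppV; apply: leq_trans (dimv_le_slice_zero_row V j) _.
have oRK := row_proj_orthogonal_slice sV ij.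
rewrite addnC; apply: leq_trans (orthogonal_dimv_le ndB oRK); rewrite leq_add2r.
apply: leq_trans (dimv_limg_le (single_rowL i) _); apply/dimvS/subvP.
move=> _ /memv_imgP [A AV ->].
rewrite (@single_row_rowE i (zero_rowL j A)) -?single_rowLE.
  by rewrite memv_img // row_zero_row (negbTE ij) -row_projLE memv_img.
move=> k ki; rewrite row_zero_row; case: eqP => // /eqP kj.
by apply: (suppV _ AV); rewrite !inE negb_or ki kj.
Qed.

Lemma exists_half_dimv_slice V (S : {set 'I_n}) : (1 < #|S|)%N ->
  rows_singular V -> exists2 i, i \in S & (\dim (slice V i) * 2 <= m)%N.
Proof.
move=> /card_gt1P [i [j [iS jS ij]]] sV.
have := orthogonal_dimv_le ndB (slices_orthogonal sV ij).
case: (leqP (\dim (slice V i) * 2) m) => [? _|]; first by exists i.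
case: (leqP (\dim (slice V j) * 2) m) => [? _|]; first by exists j.
(* lia does not identify the two elaborations of [\dim (slice V _)] that
   occur here; generalizing them makes the atoms syntactically equal. *)
by move: (\dim (slice V i)) (\dim (slice V j)) => a b; lia.
Qed.

Lemma dimv_rows_supported_le (S : {set 'I_n}) V : (1 < #|S|)%N ->
  rows_singular V -> rows_supported S V -> (\dim V * 2 <= #|S| * m)%N.
Proof.
move=> S_gt1 sV suppV; have [k cardS] : exists k, #|S| = k.+2.
  by exists #|S|.-2; lia.
elim: k S V cardS sV suppV {S_gt1} => [|k IH] S V cardS sV suppV.
  have /cards2P [i [j [ij defS]]] : #|S| == 2 by rewrite cardS.
  rewrite cardS; have := dimv_two_rows_le ij sV; rewrite -defS => /(_ suppV).
  lia.
have [|i iS smallK] := exists_half_dimv_slice (S := S) _ sV.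
  by rewrite cardS.
have cardSi : #|S :\ i| = k.+2.
  by apply/eq_add_S; rewrite -cardS (cardsD1 i S) iS.
have := IH _ _ cardSi (rows_singular_zero_row (i := i) sV)
  (rows_supported_zero_row (i := i) suppV).
have := dimv_le_slice_zero_row V i; rewrite cardS cardSi mulSn.
move: (\dim V) (\dim (slice V i)) (\dim (zero_rowL i @: V)) (k.+2 * m)%N smallK.
by move=> a b c t; lia.
Qed.

Section EqualityCase.
Variable V : {vspace 'M[F]_(n, m)}.
Hypotheses (n_gt2 : (2 < n)%N) (sV : rows_singular V)
  (dimV : (\dim V * 2 = n * m)%N).

Lemma slice_dimv_ge i : (m <= \dim (slice V i) * 2)%N.
Proof.
have suppZ : rows_supported [set~ i] (zero_rowL i @: V).
  by move=> _ /memv_imgP [A AV ->] k; rewrite !inE negbK row_zero_row => ->.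
have cardS : (1 < #|[set~ i]|)%N by rewrite cardsC1 card_ord; lia.
have := dimv_rows_supported_le cardS (rows_singular_zero_row (i := i) sV) suppZ.
have := dimv_le_slice_zero_row V i; move: dimV.
rewrite cardsC1 card_ord -[in (n * m)%N](ltn_predK n_gt2) mulSn.
move: (\dim V) (\dim (slice V i)) (\dim (zero_rowL i @: V)) (n.-1 * m)%N.
by move=> a b c t; lia.
Qed.

Lemma slice_eq j k : slice V j = slice V k.
Proof.
wlog suff slice_sub : j k / (slice V j <= slice V k)%VS.
  by apply/eqP; rewrite eqEsubv !slice_sub.
have [-> | jk] := eqVneq j k; first exact: subvv.
have [i /andP [ij ik]] := exists_ord_neq2 j k n_gt2.
have oJKI : bform_orthogonal B (slice V j + slice V k) (slice V i).
  move=> _ y /memv_addP [x xJ [x' xK ->]] yI.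
  rewrite bformDl (slices_orthogonal sV _ xJ yI) 1?eq_sym // add0r.
  by rewrite (slices_orthogonal sV _ xK yI) // eq_sym.
suff /eqP -> : (slice V k == slice V j + slice V k)%VS by apply: addvSl.
rewrite eqEdim addvSr /=; have := orthogonal_dimv_le ndB oJKI.
have := slice_dimv_ge i; have := slice_dimv_ge k.
move: (\dim (slice V i)) (\dim (slice V k)) (\dim (slice V j + slice V k)).
by move=> a b c; lia.
Qed.

Lemma slice_half_dimv i : (\dim (slice V i) * 2 = m)%N.
Proof.
have [j /andP [ji _]] := exists_ord_neq2 i i n_gt2.
have := orthogonal_dimv_le ndB (slices_orthogonal sV ji).
rewrite (slice_eq j i); have := slice_dimv_ge i.
by move: (\dim (slice V i)) => a; lia.
Qed.

Lemma slice_self_orthogonal i : bform_orthogonal B (slice V i) (slice V i).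
Proof.
have [j /andP [ji _]] := exists_ord_neq2 i i n_gt2.
by rewrite -{1}(slice_eq j i); apply: slices_orthogonal.
Qed.

Lemma row_mem_slice A i k : A \in V -> row i A \in slice V k.
Proof.
move=> AV; have [j /andP [ji _]] := exists_ord_neq2 i i n_gt2.
rewrite (slice_eq k j).
apply: (orthogonal_half_dimv_mem ndB (slice_half_dimv j)
  (slice_self_orthogonal (i := j))).
have ij : i != j by rewrite eq_sym.
move=> y yJ; apply: (row_proj_orthogonal_slice sV ij _ yJ).
by rewrite -row_projLE memv_img.
Qed.

Lemma mem_rows_slice A k : A \in V <-> (forall i, row i A \in slice V k).
Proof.
split=> [AV i | rowsA]; first exact: row_mem_slice.
rewrite (sum_single_row A); apply: memv_suml => i _.
by rewrite -mem_slice (slice_eq i k).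
Qed.

End EqualityCase.

End RowSlices.

Unset Implicit Arguments.
Set Strict Implicit.

Theorem lemma12 (F : fieldType) (n m : nat) (B : 'M[F]_m)
  (V : {vspace 'M[F]_(n, m)}) :
  (1 < n)%N ->
  symplectic B ->
  (forall A : 'M[F]_(n, m), A \in V -> totally_singular B A) ->
  (\dim V * 2 <= n * m)%N /\
  ((2 < n)%N -> (\dim V * 2 = n * m)%N ->
   exists L : 'M[F]_m, lagrangian B L /\
     (forall A : 'M[F]_(n, m), A \in V <-> (A <= L)%MS)).
Proof.
move=> n_gt1 [_ ndB] singV.
have sV : rows_singular B V.
  by move=> A AV p q; apply: singV AV _ _ (row_sub p A) (row_sub q A).
split.
  have suppT : rows_supported [set: 'I_n] V by move=> A _ k; rewrite inE.
  have cardT : (1 < #|[set: 'I_n]|)%N by rewrite cardsT card_ord.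
  by have := dimv_rows_supported_le ndB cardT sV suppT; rewrite cardsT card_ord.
move=> n_gt2 dimV; pose i0 : 'I_n := Ordinal (ltnW n_gt1); pose K := slice V i0.
have memL x : (x <= <<vbasismx K>>)%MS = (x \in K).
  by rewrite genmxE vbasismx_subE.
exists <<vbasismx K>>%MS; split; first split.
- by move=> x y; rewrite !memL; apply: (slice_self_orthogonal ndB n_gt2 sV dimV).
- by rewrite genmxE rank_vbasismx (slice_half_dimv ndB n_gt2 sV dimV).
move=> A; apply: iff_trans (mem_rows_slice ndB n_gt2 sV dimV A i0) _.
split=> [rowsA | /row_subP rowsA i]; last by rewrite -memL.
by apply/row_subP => i; rewrite memL.
Qed.
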